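(* Let $n\ge3$, $\xi\in[0,1]$, and consider the star-to-complete network with adjacency matrix $\mathbf A^\xi$, $\theta_i=1$ for all $i$, and $F(p)=p$ on $[0,1]$. If the optimal value of problem (P4) (mixed-autonomy system) is strictly greater than the optimal value of (P4) with the additional constraint $z_i=0$ for all $i$ (human-only system), then $k=s/\omega\le1-\beta$.
   Context: Star-to-complete network: for $n\ge3$ and $\xi\in[0,1]$, $\mathbf A^\xi=[\alpha_{ij}]$ is the $n\times n$ matrix with $\alpha_{ii}=0$ for all $i$, $\alpha_{1j}=\frac1{n-1}$ for $j\ne1$, $\alpha_{i1}=c_1:=\frac{\xi}{n-1}+(1-\xi)$ for $i\ne1$, and $\alpha_{ij}=c_2:=\frac{\xi}{n-1}$ for $i,j\ne1$, $i\ne j$. Parameters: $\beta\in(0,1)$ (probability a driver remains in the platform each period), $\omega>0$ (drivers' lifetime outside-option earnings), $s\ge0$ (cost of operating an autonomous vehicle for a driver's expected lifetime), $k=s/\omega$. Problem (P4): maximize over $\{p_i,\delta_i,x_i,y_{ij},z_i,r_{ij}\}$ the objective $\sum_i p_i\theta_i(1-F(p_i))-\omega\sum_i\delta_i-s\sum_i z_i$ subject to, for all $i$: $d_i=\theta_i(1-F(p_i))$; $x_i=\beta\big[\sum_j\alpha_{ji}\min\{x_j,d_j\}+\sum_j y_{ji}\big]+\delta_i$; $\sum_j y_{ij}=\max\{x_i-d_i,0\}$; $z_i=\sum_j\alpha_{ji}\max\{d_j-x_j,0\}+\sum_j r_{ji}$; $\sum_j r_{ij}=z_i-\max\{d_i-x_i,0\}$;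 all variables nonnegative. *)

From HB Require Import structures.
From mathcomp Require Import all_boot all_order all_algebra.
From mathcomp Require Import all_classical all_reals.
From mathcomp Require Import ereal.

Set Implicit Arguments. Unset Strict Implicit. Unset Printing Implicit Defensive.
Import Order.TTheory GRing.Theory Num.Theory.
Local Open Scope ring_scope.
Local Open Scope classical_set_scope.
Local Open Scope ereal_scope.
Local Open Scope ring_scope.

(* Nodes are 'I_n; node "1" of the paper is the ordinal with value 0 (the hub). *)

Definition alpha_stc {R : realType} (n : nat) (xi : R) (i j : 'I_n) : R :=
  if i == j then 0
  else if val i == 0%N then (n.-1%:R)^-1
  else if val j == 0%N then xi / (n.-1%:R) + (1 - xi)
  else xi / (n.-1%:R).

Definition F_unif {R : realType} (p : R) : R := Num.min (Num.max p 0) 1.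

(* theta_i = 1 *)
Definition demand {R : realType} (p : R) : R := 1 * (1 - F_unif p).

Record sol (R : realType) (n : nat) := Sol {
  s_p : 'I_n -> R; s_delta : 'I_n -> R; s_x : 'I_n -> R;
  s_y : 'I_n -> 'I_n -> R; s_z : 'I_n -> R; s_r : 'I_n -> 'I_n -> R }.

Definition P4_feasible {R : realType} (n : nat) (xi beta : R) (v : sol R n) : Prop :=
  let A := @alpha_stc R n xi in
  let p := s_p v in let delta := s_delta v in let x := s_x v in
  let y := s_y v in let z := s_z v in let r := s_r v in
  let d := fun i => demand (p i) in
  (forall i, x i = beta * (\sum_j A j i * Num.min (x j) (d j) + \sum_j y j i) + delta i)
  /\ (forall i, \sum_j y i j = Num.max (x i - d i) 0)
  /\ (forall i, z i = \sum_j A j i * Num.max (d j - x j) 0 + \sum_j r j i)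
  /\ (forall i, \sum_j r i j = z i - Num.max (d i - x i) 0)
  /\ (forall i, 0 <= p i /\ 0 <= delta i /\ 0 <= x i /\ 0 <= z i /\ 0 <= d i)
  /\ (forall i j, 0 <= y i j /\ 0 <= r i j).

Definition P4_objective {R : realType} (n : nat) (omega s : R) (v : sol R n) : R :=
  \sum_i s_p v i * demand (s_p v i) - omega * \sum_i s_delta v i - s * \sum_i s_z v i.

Definition P4_value {R : realType} (n : nat) (xi beta omega s : R) : \bar R :=
  ereal_sup [set (@P4_objective R n omega s v)%:E | v in [set v | @P4_feasible R n xi beta v]].

Definition P4_human_value {R : realType} (n : nat) (xi beta omega s : R) : \bar R :=
  ereal_sup [set (@P4_objective R n omega s v)%:E |
             v in [set v | @P4_feasible R n xi beta v /\ forall i, s_z v i = 0]].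

(* Any feasible mixed-autonomy solution can be turned into a human-only one by
   replacing every autonomous vehicle by a newly recruited driver: the supply
   becomes x + z, the rebalancing flows merge into y + r, and the recruitment
   becomes delta + (1 - beta) z, since a fraction beta of the extra drivers
   stays in the platform.  All demand was already served, so every flow
   constraint survives, and the objective changes by (s - omega (1 - beta)) * sum z.
   Hence if s >= omega (1 - beta) the human-only optimum is at least the mixed
   one. *)

From HB Require Import structures.
From mathcomp Require Import all_boot all_order all_algebra.
From mathcomp Require Import all_classical all_reals.
From mathcomp Require Import ereal.
From mathcomp Require Import ring lra.

Import Order.TTheory GRing.Theory Num.Theory.
Local Open Scope ring_scope.

Lemma min_add_max_subr {R : realDomainType} (a b : R) :
  Num.min a b + Num.max (b - a) 0 = b.
Proof.
by have [hab|hab] := leP a b; [rewrite max_l; [ring|lra] | rewrite max_r; [ring|lra]].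
Qed.

Lemma max_subr0_sub {R : realDomainType} (a b : R) :
  Num.max (a - b) 0 - Num.max (b - a) 0 = a - b.
Proof.
have [hab|hab] := leP a b.
  by rewrite (max_r (x := a - b)) ?max_l; [ring|lra|lra].
by rewrite (max_l (x := a - b)) ?max_r; [ring|lra|lra].
Qed.

Lemma le_ereal_sup_dominated {R : realType} {A B : set (\bar R)} :
  (forall a, A a -> exists2 b, B b & (a <= b)%E) -> (ereal_sup A <= ereal_sup B)%E.
Proof.
by move=> AB; apply: ge_ereal_sup => a /AB; apply: le_ereal_sup_tmp.
Qed.

Section Humanize.

Variables (R : realType) (n : nat) (xi beta : R).

Definition humanize (v : sol R n) : sol R n :=
  Sol (s_p v) (fun i => s_delta v i + (1 - beta) * s_z v i)
    (fun i => s_x v i + s_z v i) (fun i j => s_y v i j + s_r v i j)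
    (fun _ => 0) (fun _ _ => 0).

Lemma P4_feasible_demand_le_supply {v : sol R n} i :
  P4_feasible xi beta v -> demand (s_p v i) <= s_x v i + s_z v i.
Proof.
move=> [_ [_ [_ [hr [_ hyr]]]]].
have r_ge0 : 0 <= \sum_j s_r v i j by apply: sumr_ge0 => j _; case: (hyr i j).
have : demand (s_p v i) - s_x v i <= Num.max (demand (s_p v i) - s_x v i) 0.
  by rewrite le_max lexx.
move: r_ge0; rewrite hr; lra.
Qed.

Lemma humanize_feasible (v : sol R n) :
  beta <= 1 -> P4_feasible xi beta v -> P4_feasible xi beta (humanize v).
Proof.
move=> beta_le1 hv; have served i := P4_feasible_demand_le_supply i hv.
case: v hv served => p delta x y z r; rewrite /P4_feasible /=.
set A := @alpha_stc R n xi; set d := fun i => demand (p i).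
move=> [hx [hy [hz [hr [hnn hyr]]]]] served.
have max_dx0 j : Num.max (d j - (x j + z j)) 0 = 0.
  by rewrite max_r //; have := served j; rewrite /d; lra.
split; last split; last split; last split; last split.
- move=> i; rewrite /= -/A.
  have -> : \sum_j A j i * Num.min (x j + z j) (d j)
      = \sum_j A j i * Num.min (x j) (d j) + \sum_j A j i * Num.max (d j - x j) 0.
    rewrite -big_split; apply: eq_bigr => j _ /=.
    by rewrite -mulrDr min_add_max_subr min_r ?served.
  by rewrite big_split /= (hz i) {1}(hx i); ring.
- move=> i; rewrite /= big_split /= hy hr [RHS]max_l; last by have := served i; lra.
  by have := max_subr0_sub (x i) (d i); rewrite /d; lra.
- move=> i /=; rewrite big1 ?big1_eq ?addr0 // => j _.
  by rewrite -/d max_dx0 mulr0.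
- by move=> i /=; rewrite big1_eq -/d max_dx0 subrr.
- move=> i /=; have [p_ge0 [delta_ge0 [x_ge0 [z_ge0 d_ge0]]]] := hnn i.
  have : 0 <= (1 - beta) * z i by apply: mulr_ge0; lra.
  by do !split=> //; lra.
- by move=> i j /=; have [y_ge0 r_ge0] := hyr i j; split; lra.
Qed.

Lemma humanize_objective (omega s : R) (v : sol R n) :
  P4_objective omega s (humanize v)
  = P4_objective omega s v + (s - omega * (1 - beta)) * \sum_i s_z v i.
Proof.
by rewrite /P4_objective /= big_split /= -mulr_sumr big1_eq; ring.
Qed.

Lemma P4_value_le_human_value (omega s : R) :
  beta <= 1 -> omega * (1 - beta) <= s ->
  (P4_value n xi beta omega s <= P4_human_value n xi beta omega s)%E.
Proof.
move=> beta_le1 cost_ge; apply: le_ereal_sup_dominated => _ [v hv <-].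
exists (P4_objective omega s (humanize v))%:E.
  by exists (humanize v) => //; split=> //; exact: humanize_feasible.
have z_ge0 : 0 <= \sum_i s_z v i.
  case: hv => _ [_ [_ [_ [hnn _]]]]; apply: sumr_ge0 => i _.
  by case: (hnn i) => _ [_ [_ []]].
by rewrite lee_fin humanize_objective lerDl mulr_ge0 // subr_ge0.
Qed.

End Humanize.

Theorem proposition1 (R : realType) (n : nat) (xi beta omega s : R) :
  (3 <= n)%N -> 0 <= xi <= 1 -> 0 < beta < 1 -> 0 < omega -> 0 <= s ->
  (P4_human_value n xi beta omega s < P4_value n xi beta omega s)%E ->
  s / omega <= 1 - beta.
Proof.
move=> _ _ /andP[_ beta_lt1] omega_gt0 _ gap.
rewrite leNgt; apply/negP => cost_gt.
have cost_ge : omega * (1 - beta) <= s.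
  by rewrite mulrC -ler_pdivlMr //; exact: ltW.
move: gap; rewrite ltNge P4_value_le_human_value //; exact: ltW.
Qed.
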